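(* Let $\mathcal C$ be a full subcategory of grading-restricted generalized $V$-modules for a vertex operator algebra $V$ such that $0\in\mathcal C$, $\mathcal C$ is closed under submodules, quotients and finite direct sums, and every module in $\mathcal C$ is finitely generated. Then $\mathrm{Ind}(\mathcal C)$ is equal to the full subcategory of generalized $V$-modules that are unions of their submodules which are objects of $\mathcal C$.
   Context: $\mathrm{Ind}(\mathcal C)$ (the direct limit completion) is the full subcategory of weak $V$-modules isomorphic to direct limits, in the category of weak $V$-modules, of direct systems $\alpha:I\to\mathcal C$ indexed by directed sets. A generalized $V$-module is a weak module that is the direct sum of its generalized $L(0)$-eigenspaces. *)

From HB Require Import structures.
From mathcomp Require Import all_boot all_order all_algebra.
From mathcomp Require Import reals complex.
Set Implicit Arguments. Unset Strict Implicit. Unset Printing Implicit Defensive.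
Import Order.TTheory GRing.Theory Num.Theory.
Local Open Scope ring_scope.

Section VOA.
Variable K : fieldType.

Definition zbinom (a : int) (i : nat) : K :=
  (\prod_(j < i) ((a - (j : nat)%:Z)%:~R : K)) / (i`!)%:R.

Definition in_span (W : lmodType K) (b : seq W) (w : W) : Prop :=
  exists c : 'I_(size b) -> K, w = \sum_(i < size b) c i *: b`_i.

Definition lin_fun (W1 W2 : lmodType K) (g : W1 -> W2) : Prop :=
  forall (a : K) (x y : W1), g (a *: x + y) = a *: g x + g y.

Variable V : lmodType K.

(* A "vertex operator" on W: act v n w = v_n w, the coefficient of x^{-n-1} in Y(v,x)w. *)
Definition vertex_op_axioms (W : lmodType K) (act : V -> int -> W -> W) : Prop :=
  [/\ (forall v n, lin_fun (act v n)),
      (forall n w, lin_fun (fun v => act v n w)) &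
      (forall v w, exists N : int, forall n : int, N <= n -> act v n w = 0)].

(* Jacobi identity in component form (Borcherds identity); all sums are
   finite by lower truncation, expressed as "for all large enough cutoffs". *)
Definition borcherds (Y : V -> int -> V -> V) (W : lmodType K)
    (act : V -> int -> W -> W) : Prop :=
  forall (u v : V) (w : W) (l m n : int), exists N : nat, forall M : nat, (N <= M)%N ->
    \sum_(i < M) zbinom m i *: act (Y u (l + (i : nat)%:Z) v) (m + n - (i : nat)%:Z) w
    = \sum_(i < M) (((-1) ^+ i) * zbinom l i) *:
        (act u (l + m - (i : nat)%:Z) (act v (n + (i : nat)%:Z) w)
         - ((-1 : K) ^ l) *: act v (l + n - (i : nat)%:Z) (act u (m + (i : nat)%:Z) w)).

Definition Lop (W : lmodType K) (act : V -> int -> W -> W) (om : V) (n : int) : W -> W :=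
  act om (n + 1).

Definition is_VOA (Y : V -> int -> V -> V) (one om : V) : Prop :=
  [/\ vertex_op_axioms Y,
      (forall n v, Y one n v = if n == -1 then v else 0),
      (forall v, Y v (-1) one = v /\ forall n : int, 0 <= n -> Y v n one = 0),
      borcherds Y Y &
      [/\ (exists c : K, forall (m n : int) (v : V),
          Lop Y om m (Lop Y om n v) - Lop Y om n (Lop Y om m v)
          = (m - n)%:~R *: Lop Y om (m + n) v
            + (if m + n == 0 then ((m ^+ 3 - m)%:~R / 12%:R) * c else 0) *: v),
      (forall v n w, Y (Lop Y om (-1) v) n w = - (n%:~R) *: Y v (n - 1) w) &
      [/\ (* V = direct sum of the L(0)-eigenspaces V_(n), n integer *)
          (forall v, exists s : seq (int * V),
              v = \sum_(p <- s) p.2 /\ forall p, p \in s -> Lop Y om 0 p.2 = p.1%:~R *: p.2),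
          (forall n : int, exists b : seq V, forall v,
              Lop Y om 0 v = n%:~R *: v -> in_span b v) &
          (exists N : int, forall n : int, n < N -> forall v, Lop Y om 0 v = n%:~R *: v -> v = 0)]]].

Variables (Y : V -> int -> V -> V) (one om : V).

Definition is_weak_module (W : lmodType K) (act : V -> int -> W -> W) : Prop :=
  [/\ vertex_op_axioms act,
      (forall n w, act one n w = if n == -1 then w else 0) &
      borcherds Y act].

Record wmod := WMod {
  wcar :> lmodType K;
  wact : V -> int -> wcar -> wcar;
  wax : is_weak_module wact }.

Definition is_hom (M N : wmod) (g : M -> N) : Prop :=
  lin_fun g /\ forall v n x, g (@wact M v n x) = @wact N v n (g x).

Definition gen_eig (M : wmod) (lam : K) (w : M) : Prop :=
  exists k : nat, iter k (fun x => Lop (@wact M) om 0 x - lam *: x) w = 0.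

Definition is_generalized (M : wmod) : Prop :=
  forall w : M, exists s : seq (K * M),
    w = \sum_(p <- s) p.2 /\ forall p, p \in s -> gen_eig p.1 p.2.

Definition is_grading_restricted_generalized (M : wmod) : Prop :=
  [/\ is_generalized M,
      (forall lam, exists b : seq M, forall w, gen_eig lam w -> in_span b w) &
      (forall lam, exists N : int, forall k : int, k < N ->
          forall w : M, gen_eig (lam + k%:~R) w -> w = 0)].

Definition is_submodule (M : wmod) (S : M -> Prop) : Prop :=
  [/\ S 0, (forall a x y, S x -> S y -> S (a *: x + y)) &
      (forall v n x, S x -> S (@wact M v n x))].

Definition fin_generated (M : wmod) : Prop :=
  exists s : seq M, forall S : M -> Prop, is_submodule S ->
    (forall x, x \in s -> S x) -> forall w, S w.

Definition is_directed (I : Type) (le : I -> I -> Prop) : Prop :=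
  [/\ inhabited I, (forall i, le i i),
      (forall i j k, le i j -> le j k -> le i k) &
      (forall i j, exists k, le i k /\ le j k)].

Definition is_direct_system (I : Type) (le : I -> I -> Prop) (A : I -> wmod)
    (f : forall i j, A i -> A j) : Prop :=
  [/\ (forall i j, le i j -> is_hom (f i j)),
      (forall i x, f i i x = x) &
      (forall i j k, le i j -> le j k -> forall x, f j k (f i j x) = f i k x)].

Definition is_cocone (I : Type) (le : I -> I -> Prop) (A : I -> wmod)
    (f : forall i j, A i -> A j) (X : wmod) (psi : forall i, A i -> X) : Prop :=
  (forall i, is_hom (psi i)) /\
  (forall i j, le i j -> forall x, psi j (f i j x) = psi i x).

Definition is_direct_limit (I : Type) (le : I -> I -> Prop) (A : I -> wmod)
    (f : forall i j, A i -> A j) (W : wmod) (phi : forall i, A i -> W) : Prop :=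
  is_cocone le f phi /\
  forall (X : wmod) (psi : forall i, A i -> X), is_cocone le f psi ->
    exists g : W -> X, [/\ is_hom g, (forall i x, g (phi i x) = psi i x) &
      forall g' : W -> X, is_hom g' -> (forall i x, g' (phi i x) = psi i x) ->
        forall w, g' w = g w].

(* Ind(C): weak modules isomorphic to a direct limit of a direct system in C
   indexed by a directed set (the universal property already characterizes
   the colimit up to isomorphism) *)
Definition in_Ind (C : wmod -> Prop) (W : wmod) : Prop :=
  exists (I : Type) (le : I -> I -> Prop) (A : I -> wmod)
         (f : forall i j, A i -> A j) (phi : forall i, A i -> W),
    [/\ is_directed le, (forall i, C (A i)), is_direct_system le f &
        is_direct_limit le f phi].

(* W is the union of its submodules lying in C (submodules are given as
   images of injective homomorphisms from objects of C) *)
Definition union_of_C_submodules (C : wmod -> Prop) (W : wmod) : Prop :=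
  forall w : W, exists (M : wmod) (g : M -> W),
    [/\ C M, is_hom g, injective g & exists x, g x = w].

End VOA.

(* - Inclusion "Ind(C) in unions": if (W, phi) is the direct limit of a
     directed system A in C, the union U of the images phi_i(A_i) is a
     submodule, and corestricting phi to U gives a cocone; uniqueness of the
     mediating morphism forces the inclusion U -> W to be onto, so every
     element of W lies in some phi_i(A_i) (lemma [direct_limit_covers]).
     Such an image is a quotient of A_i, hence in C, and W is generalized
     since homomorphisms preserve generalized L(0)-eigenvectors.
   - Inclusion "unions in Ind(C)": the submodules of W lying in C, ordered by
     inclusion, form a directed set (0 is in C, and S + T is a quotient of
     S (+) T); the inclusion maps form a direct system whose limit is W
     itself, because a cocone out of it is well defined on the union W. *)
From HB Require Import structures.
From mathcomp Require Import all_boot all_order all_algebra.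
From mathcomp Require Import boolp.
From mathcomp Require Import reals complex.
Set Implicit Arguments. Unset Strict Implicit. Unset Printing Implicit Defensive.
Import Order.TTheory GRing.Theory Num.Theory.
Local Open Scope ring_scope.

Section LinFun.
Variables (K : fieldType) (W1 W2 : lmodType K) (g : W1 -> W2).
Hypothesis hg : lin_fun g.

Lemma lin0 : g 0 = 0.
Proof.
have h := hg 1 0 0; rewrite !scale1r addr0 in h.
by apply: (addrI (g 0)); rewrite addr0 -h.
Qed.

Lemma linD x y : g (x + y) = g x + g y.
Proof. by have := hg 1 x y; rewrite !scale1r. Qed.

Lemma linZ a x : g (a *: x) = a *: g x.
Proof. by have := hg a x 0; rewrite !addr0 lin0 addr0. Qed.

Lemma linB x y : g (x - y) = g x - g y.
Proof. by rewrite -scaleN1r linD linZ scaleN1r. Qed.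

Lemma lin_big (I : Type) (r : seq I) (P : pred I) (F : I -> W1) :
  g (\sum_(i <- r | P i) F i) = \sum_(i <- r | P i) g (F i).
Proof. exact: (big_morph g linD lin0). Qed.

End LinFun.

Section WeakModules.
Variables (K : fieldType) (V : lmodType K) (Y : V -> int -> V -> V) (one : V).

Lemma wact_lin (M : wmod Y one) v n : lin_fun (@wact _ _ Y one M v n).
Proof. by case: (wax M) => [[h _ _] _ _]; apply: h. Qed.

Lemma wact0 (M : wmod Y one) v n : @wact _ _ Y one M v n 0 = 0.
Proof. exact: (lin0 (@wact_lin M v n)). Qed.

Lemma id_hom (W : wmod Y one) : is_hom (fun x : W => x).
Proof. by []. Qed.

(* The weak-module axioms transfer along a jointly injective pair of linear
   maps intertwining the actions; this builds submodules and products. *)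
Lemma weak_module_of_embedding (M : lmodType K) (act : V -> int -> M -> M)
    (N1 N2 : wmod Y one) (g1 : M -> N1) (g2 : M -> N2) :
  lin_fun g1 -> lin_fun g2 ->
  (forall v n x, g1 (act v n x) = wact v n (g1 x)) ->
  (forall v n x, g2 (act v n x) = wact v n (g2 x)) ->
  (forall x y, g1 x = g1 y -> g2 x = g2 y -> x = y) ->
  is_weak_module Y one act.
Proof.
move=> l1 l2 c1 c2 inj.
case: (wax N1) => [[a1 b1 t1] v1 B1]; case: (wax N2) => [[a2 b2 t2] v2 B2].
split; first split.
- move=> v n a x y; apply: inj.
    by rewrite c1 !(linD l1) !(linZ l1) (a1 v n) !c1.
  by rewrite c2 !(linD l2) !(linZ l2) (a2 v n) !c2.
- move=> n w a x y; apply: inj.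
    by rewrite c1 !(linD l1) !(linZ l1) (b1 n (g1 w)) !c1.
  by rewrite c2 !(linD l2) !(linZ l2) (b2 n (g2 w)) !c2.
- move=> v w; case: (t1 v (g1 w)) => n1 h1; case: (t2 v (g2 w)) => n2 h2.
  exists (Order.max n1 n2) => n hn; apply: inj.
    by rewrite c1 (lin0 l1) h1 // (le_trans _ hn) // le_max lexx.
  by rewrite c2 (lin0 l2) h2 // (le_trans _ hn) // le_max lexx orbT.
- move=> n w; apply: inj.
    by rewrite c1 v1; case: (n == -1) => //; rewrite (lin0 l1).
  by rewrite c2 v2; case: (n == -1) => //; rewrite (lin0 l2).
- move=> u v w l m n.
  case: (B1 u v (g1 w) l m n) => n1 h1; case: (B2 u v (g2 w) l m n) => n2 h2.
  exists (maxn n1 n2) => M' hM; apply: inj.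
    rewrite !(lin_big l1); under eq_bigr do rewrite (linZ l1) c1.
    under [RHS]eq_bigr do rewrite (linZ l1) (linB l1) (linZ l1) !c1.
    by apply: h1; rewrite (leq_trans _ hM) // leq_maxl.
  rewrite !(lin_big l2); under eq_bigr do rewrite (linZ l2) c2.
  under [RHS]eq_bigr do rewrite (linZ l2) (linB l2) (linZ l2) !c2.
  by apply: h2; rewrite (leq_trans _ hM) // leq_maxr.
Qed.

End WeakModules.
Arguments wact_lin {K V Y one} M v n.

Section Submodule.
Variables (K : fieldType) (V : lmodType K) (Y : V -> int -> V -> V) (one : V).
Variables (W : wmod Y one) (S : W -> Prop) (hS : is_submodule S).

Definition sP : pred W := fun x => `[< S x >].

Lemma sPE x : sP x = true <-> S x.
Proof. by rewrite /sP; split => /asboolP. Qed.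

Lemma sP_closed : subsemimod_closed sP.
Proof.
case: hS => S0 Slin _.
split; first split.
- by apply/sPE.
- move=> x y /sPE Sx /sPE Sy; apply/sPE; have := Slin 1 x y Sx Sy; by rewrite scale1r.
- move=> a x /sPE Sx; apply/sPE; have := Slin a x 0 Sx S0; by rewrite addr0.
Qed.

HB.instance Definition _ := GRing.isSubmodClosed.Build K W sP sP_closed.

Inductive subT : Type := SubT (x : W) of x \in sP.
Definition sval' (u : subT) : W := let: SubT x _ := u in x.
HB.instance Definition _ := [isSub of subT for sval'].
HB.instance Definition _ := [Choice of subT by <:].
HB.instance Definition _ := [SubChoice_isSubZmodule of subT by <:].
HB.instance Definition _ := [SubZmodule_isSubLmodule of subT by <:].

Definition sins (w : W) : subT := insubd 0 w.

Lemma sinsK w : S w -> sval' (sins w) = w.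
Proof. by move=> Sw; rewrite /sins val_insubd ifT //; apply/sPE. Qed.

Lemma subvalP (x : subT) : S (sval' x).
Proof. by apply/sPE; apply: (valP x). Qed.

Lemma svalK (x : subT) : sins (sval' x) = x.
Proof. exact: valKd. Qed.

Definition sact v n (x : subT) : subT := sins (@wact _ _ Y one W v n (sval' x)).

Lemma sval_act v n x : sval' (sact v n x) = wact v n (sval' x).
Proof. by rewrite sinsK //; case: hS => _ _; apply; apply: subvalP. Qed.

Lemma sub_weak : is_weak_module Y one sact.
Proof.
apply: (@weak_module_of_embedding _ _ _ _ _ _ W W sval' sval') => //.
- exact: sval_act.
- exact: sval_act.
- by move=> x y e _; apply: val_inj.
Qed.

Definition subW : wmod Y one := WMod sub_weak.

Lemma sval_hom : is_hom (sval' : subW -> W).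
Proof. by split => //; apply: sval_act. Qed.

End Submodule.
Arguments sval' {K V Y one W S}.

Section Product.
Variables (K : fieldType) (V : lmodType K) (Y : V -> int -> V -> V) (one : V).
Variables (M1 M2 : wmod Y one).

Definition pact v n (x : (M1 * M2)%type) : (M1 * M2)%type :=
  (wact v n x.1, wact v n x.2).

Lemma prod_weak : is_weak_module Y one pact.
Proof.
apply: (@weak_module_of_embedding _ _ _ _ _ _ M1 M2 fst snd) => //.
by move=> [a b] [c d] /= -> ->.
Qed.

Definition prodW : wmod Y one := WMod prod_weak.

Lemma inl_hom : is_hom (fun x : M1 => (x, 0) : prodW).
Proof.
split; last by move=> v n x; rewrite /= /pact /= wact0.
by move=> a x y; apply: injective_projections; rewrite /= ?scaler0 ?addr0.
Qed.

Lemma inr_hom : is_hom (fun x : M2 => (0, x) : prodW).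
Proof.
split; last by move=> v n x; rewrite /= /pact /= wact0.
by move=> a x y; apply: injective_projections; rewrite /= ?scaler0 ?addr0.
Qed.

End Product.

Section Image.
Variables (K : fieldType) (V : lmodType K) (Y : V -> int -> V -> V) (one : V).
Variables (M W : wmod Y one) (h : M -> W) (hh : is_hom h).

Definition imgS (w : W) : Prop := exists x, h x = w.

Lemma imgS_sub : is_submodule imgS.
Proof.
case: hh => hl hc; split.
- by exists 0; apply: lin0.
- by move=> a _ _ [x <-] [y <-]; exists (a *: x + y); rewrite hl.
- by move=> v n _ [x <-]; exists (wact v n x); rewrite hc.
Qed.

Definition cores (x : M) : subW imgS_sub := sins imgS_sub (h x).

Lemma cores_val x : sval' (cores x) = h x.
Proof. by rewrite /cores sinsK //; exists x. Qed.

Lemma cores_hom : is_hom cores.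
Proof.
case: hh => hl hc; split.
- by move=> a x y; apply: val_inj => /=; rewrite cores_val hl -!cores_val.
- by move=> v n x; apply: val_inj => /=; rewrite cores_val sval_act cores_val hc.
Qed.

Lemma cores_surj y : exists x, cores x = y.
Proof.
case: (subvalP y) => x hx; exists x; apply: val_inj => /=.
by rewrite cores_val hx.
Qed.

End Image.
Arguments cores_surj {K V Y one M W h} hh y.

Section GeneralizedEigenvectors.
Variables (K : fieldType) (V : lmodType K) (Y : V -> int -> V -> V) (one om : V).

Lemma gen_eig_hom (M W : wmod Y one) (g : M -> W) lam w :
  is_hom g -> gen_eig om lam w -> gen_eig om lam (g w).
Proof.
case=> hl hc [k hk]; exists k.
suff -> : forall j x, iter j (fun x => Lop (@wact _ _ Y one W) om 0 x - lam *: x) (g x)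
   = g (iter j (fun x => Lop (@wact _ _ Y one M) om 0 x - lam *: x) x).
  by rewrite hk (lin0 hl).
elim=> [|j IH] x //=; rewrite IH /Lop.
by rewrite (linB hl) (linZ hl) hc.
Qed.

Lemma generalized_hom (M W : wmod Y one) (g : M -> W) x :
  is_hom g -> is_generalized om M ->
  exists s : seq (K * W), g x = \sum_(p <- s) p.2 /\ forall p, p \in s -> gen_eig om p.1 p.2.
Proof.
move=> hg hM; case: (hM x) => s [-> hs].
exists (map (fun p => (p.1, g p.2)) s); split.
  by rewrite (lin_big hg.1) big_map.
move=> p /mapP [q qs ->] /=; apply: gen_eig_hom => //; exact: hs.
Qed.

End GeneralizedEigenvectors.

Section DirectLimitCovers.
Variables (K : fieldType) (V : lmodType K) (Y : V -> int -> V -> V) (one : V).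
Variables (I : Type) (le : I -> I -> Prop) (A : I -> wmod Y one).
Variables (f : forall i j, A i -> A j) (W : wmod Y one) (phi : forall i, A i -> W).
Arguments f : clear implicits.
Arguments phi : clear implicits.
Hypotheses (hdir : is_directed le) (hcoc : is_cocone le f phi).

Definition images_union (w : W) : Prop := exists i x, phi i x = w.

Lemma images_union_sub : is_submodule images_union.
Proof.
case: hdir => [[i0] _ _ hub]; case: hcoc => hphi hcompat; split.
- by exists i0, 0; apply: lin0 (hphi i0).1.
- move=> a _ _ [i [x <-]] [j [y <-]].
  case: (hub i j) => k [hik hjk].
  by exists k, (a *: f i k x + f j k y); rewrite (hphi k).1 !hcompat.
- by move=> v n _ [i [x <-]]; exists i, (wact v n x); rewrite (hphi i).2.
Qed.

Definition phi_cores i (x : A i) : subW images_union_sub :=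
  sins images_union_sub (phi i x).

Lemma phi_coresK i x : sval' (phi_cores x) = phi i x.
Proof. by rewrite /phi_cores sinsK //; exists i, x. Qed.

Lemma phi_cores_cocone : is_cocone le f phi_cores.
Proof.
case: hcoc => hphi hcompat; split.
  move=> i; split.
    by move=> a x y; apply: val_inj => /=; rewrite phi_coresK (hphi i).1 -!phi_coresK.
  move=> v n x; apply: val_inj => /=.
  by rewrite phi_coresK sval_act phi_coresK (hphi i).2.
by move=> i j hij x; apply: val_inj => /=; rewrite !phi_coresK hcompat.
Qed.

(* Both the identity of W and (inclusion o mediating map) mediate phi, so
   they agree and every w lies in the union of the images. *)
Lemma direct_limit_covers :
  is_direct_limit le f phi -> forall w, images_union w.
Proof.
move=> [_ huniv] w.
case: (huniv _ _ phi_cores_cocone) => g [[gl gc] gphi _].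
case: (huniv _ _ hcoc) => g0 [_ _ uniq].
have hcomp : is_hom (fun x => sval' (g x)).
  by split=> [a x y | v n x]; rewrite ?gl ?gc ?sval_act.
have e1 := uniq (fun x => x) (id_hom W) (fun i x => erefl).
have e2 := uniq _ hcomp (fun i x => etrans (congr1 sval' (gphi i x)) (phi_coresK x)).
by have := subvalP (g w); rewrite e2 -e1.
Qed.

End DirectLimitCovers.

Section IndIsUnion.
Variables (K : fieldType) (V : lmodType K) (Y : V -> int -> V -> V) (one om : V).
Variable C : wmod Y one -> Prop.
Hypothesis hCgen : forall M, C M -> is_generalized om M.
Hypothesis hCquot : forall (M N : wmod Y one) (g : M -> N),
      C M -> is_hom g -> (forall y, exists x, g x = y) -> C N.

Lemma ind_to_union (W : wmod Y one) :
  in_Ind C W -> is_generalized om W /\ union_of_C_submodules C W.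
Proof.
move=> [I [le [A [f [phi [hdir hC _ hlim]]]]]].
have cover := direct_limit_covers hdir hlim.1 hlim.
have hphi i := (hlim.1.1 i).
split=> w; case: (cover w) => i [x <-].
  exact: (generalized_hom _ (hphi i) (hCgen (hC i))).
exists (subW (imgS_sub (hphi i))), sval'; split.
- exact: hCquot (hC i) (cores_hom (hphi i)) (cores_surj (hphi i)).
- exact: sval_hom.
- exact: val_inj.
- by exists (cores (hphi i) x); rewrite cores_val.
Qed.

End IndIsUnion.

Section UnionIsInd.
Variables (K : fieldType) (V : lmodType K) (Y : V -> int -> V -> V) (one : V).
Variable C : wmod Y one -> Prop.
Hypothesis hC0 : forall M : wmod Y one, (forall x : M, x = 0) -> C M.
Hypothesis hCquot : forall (M N : wmod Y one) (g : M -> N),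
      C M -> is_hom g -> (forall y, exists x, g x = y) -> C N.
Hypothesis hCsum : forall (M1 M2 N : wmod Y one) (i1 : M1 -> N) (i2 : M2 -> N),
      C M1 -> C M2 -> is_hom i1 -> is_hom i2 ->
      (forall w, exists x1 x2, w = i1 x1 + i2 x2) ->
      (forall x1 x2, i1 x1 + i2 x2 = 0 -> x1 = 0 /\ x2 = 0) -> C N.
Variable W : wmod Y one.

Record csub := CSub { cs_set : W -> Prop; cs_sub : is_submodule cs_set;
                      cs_in : C (subW cs_sub) }.

Definition csub_le (i j : csub) := forall w, cs_set i w -> cs_set j w.

Definition csub_incl (i j : csub) (x : subW (cs_sub i)) : subW (cs_sub j) :=
  sins (cs_sub j) (sval' x).
Arguments csub_incl : clear implicits.

Lemma csub_inclK i j x : csub_le i j -> sval' (csub_incl i j x) = sval' x.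
Proof. by move=> hij; rewrite /csub_incl sinsK //; apply: hij; apply: subvalP. Qed.

Lemma csub_direct_system :
  is_direct_system csub_le csub_incl.
Proof.
split.
- move=> i j hij; split.
    by move=> a x y; apply: val_inj => /=; rewrite !csub_inclK.
  by move=> v n x; apply: val_inj => /=; rewrite csub_inclK // !sval_act csub_inclK.
- by move=> i x; apply: svalK.
- move=> i j k hij hjk x; apply: val_inj => /=.
  by rewrite csub_inclK ?csub_inclK // => w /hij /hjk.
Qed.

Definition sum_set (S T : W -> Prop) (w : W) :=
  exists a b, [/\ S a, T b & w = a + b].

Lemma sum_set_sub S T : is_submodule S -> is_submodule T -> is_submodule (sum_set S T).
Proof.
case=> S0 Slin Sact [T0 Tlin Tact]; split.
- by exists 0, 0; rewrite addr0.
- move=> c _ _ [a1 [b1 [h1 h2 ->]]] [a2 [b2 [h3 h4 ->]]].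
  exists (c *: a1 + a2), (c *: b1 + b2); split; auto.
  by rewrite scalerDr -!addrA; congr (_ + _); rewrite addrCA.
- move=> v n _ [a [b [h1 h2 ->]]].
  exists (wact v n a), (wact v n b); split; auto.
  exact: (linD (wact_lin W v n)).
Qed.

Lemma prod_in_C (M1 M2 : wmod Y one) : C M1 -> C M2 -> C (prodW M1 M2).
Proof.
move=> C1 C2; apply: (hCsum C1 C2 (inl_hom _ _) (inr_hom _ _)).
  move=> [x1 x2]; exists x1, x2.
  by apply: injective_projections; rewrite /= ?addr0 ?add0r.
move=> x1 x2 e; split.
  by have := congr1 fst e; rewrite /= addr0.
by have := congr1 snd e; rewrite /= add0r.
Qed.

(* the sum of two C-submodules is in C: it is the image of their product
   under addition *)
Lemma sum_set_C (i j : csub) : C (subW (sum_set_sub (cs_sub i) (cs_sub j))).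
Proof.
set P := prodW (subW (cs_sub i)) (subW (cs_sub j)).
set Sij := sum_set_sub _ _.
pose q (p : P) : subW Sij := sins Sij (sval' p.1 + sval' p.2).
have qv p : sval' (q p) = sval' p.1 + sval' p.2.
  by rewrite /q sinsK //; exists (sval' p.1), (sval' p.2); split=> //; apply: subvalP.
apply: (hCquot (g := q) (prod_in_C (cs_in i) (cs_in j))).
  split=> [c x y | v n x]; apply: val_inj => /=.
    rewrite qv /= qv qv scalerDr -!addrA; congr (_ + _); exact: addrCA.
  by rewrite qv /= !sval_act qv (linD (wact_lin W v n)).
move=> y; case: (subvalP y) => a [b [ha hb e]].
exists (sins (cs_sub i) a, sins (cs_sub j) b); apply: val_inj => /=.
by rewrite qv /= !sinsK.
Qed.

Definition csub_sum (i j : csub) : csub := CSub (sum_set_C i j).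

Lemma csub_sum_ub i j : csub_le i (csub_sum i j) /\ csub_le j (csub_sum i j).
Proof.
case: (cs_sub i) (cs_sub j) => [Si0 _ _] [Sj0 _ _].
by split=> w h; [exists w, 0; rewrite addr0 | exists 0, w; rewrite add0r].
Qed.

Lemma zero_sub : is_submodule (fun w : W => w = 0).
Proof.
split => //.
- by move=> a x y -> ->; rewrite scaler0 addr0.
- by move=> v n x ->; apply: wact0.
Qed.

Lemma csub_directed : is_directed csub_le.
Proof.
have C0 : C (subW zero_sub).
  by apply: hC0 => x; apply: val_inj; rewrite /= (subvalP x).
split.
- exact: inhabits (CSub C0).
- by move=> i w.
- by move=> i j k hij hjk w /hij /hjk.
- by move=> i j; exists (csub_sum i j); apply: csub_sum_ub.
Qed.

Section Limit.
Hypothesis hdir : is_directed csub_le.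
Hypothesis hcover : forall w, exists i, cs_set i w.

Lemma cocone_agree (X : wmod Y one) (psi : forall i, subW (cs_sub i) -> X) :
  is_cocone csub_le csub_incl psi -> forall i j w, cs_set i w -> cs_set j w ->
  psi i (sins (cs_sub i) w) = psi j (sins (cs_sub j) w).
Proof.
case: hdir => _ _ _ hub [_ hcompat] i j w hi hj.
have mono i' k : csub_le i' k -> cs_set i' w ->
    psi i' (sins (cs_sub i') w) = psi k (sins (cs_sub k) w).
  move=> hik hw; rewrite -(hcompat i' k hik); congr (psi k _).
  by apply: val_inj => /=; rewrite csub_inclK // !sinsK //; apply: hik.
case: (hub i j) => k [hik hjk].
by rewrite (mono i k) // (mono j k).
Qed.

Lemma csub_direct_limit :
  is_direct_limit csub_le csub_incl (fun i (x : subW (cs_sub i)) => sval' x).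
Proof.
split.
  by split=> [i | i j hij x]; [apply: sval_hom | rewrite csub_inclK].
move=> X psi hpsi.
pose idx w := proj1_sig (cid (hcover w)).
have idxP w : cs_set (idx w) w := proj2_sig (cid (hcover w)).
pose g w := psi (idx w) (sins (cs_sub (idx w)) w).
have gE i w : cs_set i w -> psi i (sins (cs_sub i) w) = g w.
  by move=> hw; apply: (cocone_agree hpsi).
have [hom _] := hpsi.
exists g; split.
- case: hdir => _ _ _ hub; split.
    move=> a x y; case: (hub (idx x) (idx y)) => k [hxk hyk].
    have hx := hxk _ (idxP x); have hy := hyk _ (idxP y).
    have hxy : cs_set k (a *: x + y) by case: (cs_sub k) => _ hl _; apply: hl.
    rewrite -(gE k _ hx) -(gE k _ hy) -(gE k _ hxy) -(hom k).1.
    by congr (psi k _); apply: val_inj => /=; rewrite !sinsK.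
  move=> v n x.
  have hvx : cs_set (idx x) (wact v n x) by case: (cs_sub (idx x)) => _ _; apply.
  rewrite -(gE _ _ hvx) -(hom (idx x)).2; congr (psi _ _).
  by apply: val_inj => /=; rewrite sval_act !sinsK.
- by move=> i x /=; rewrite -(gE i _ (subvalP x)) svalK.
- by move=> g' _ hphi w; rewrite -{1}(sinsK (cs_sub (idx w)) (idxP w)) hphi.
Qed.

End Limit.

(* a union of C-submodules given as injective images is covered by the
   C-submodules of [csub]: the image of a morphism from C is a quotient *)
Lemma csub_cover : union_of_C_submodules C W -> forall w, exists i, cs_set i w.
Proof.
move=> hU w; case: (hU w) => M [g [CM hg _ [x gx]]].
by exists (CSub (hCquot CM (cores_hom hg) (cores_surj hg))); exists x.
Qed.

Lemma union_to_ind : union_of_C_submodules C W -> in_Ind C W.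
Proof.
move=> hU; exists csub, csub_le, (fun i => subW (cs_sub i)), csub_incl.
exists (fun i x => sval' x); split.
- exact: csub_directed.
- exact: cs_in.
- exact: csub_direct_system.
- exact: (csub_direct_limit csub_directed (csub_cover hU)).
Qed.

End UnionIsInd.

Unset Implicit Arguments.
Set Strict Implicit.
Theorem proposition4 (R : realType) (V : lmodType R[i])
  (Y : V -> int -> V -> V) (one om : V)
  (hV : is_VOA Y one om)
  (C : wmod Y one -> Prop)
  (* C is a subcategory of grading-restricted generalized V-modules *)
  (hCgr : forall M, C M -> is_grading_restricted_generalized om M)
  (* 0 is in C *)
  (hC0 : forall M : wmod Y one, (forall x : M, x = 0) -> C M)
  (* closed under submodules *)
  (hCsub : forall (M N : wmod Y one) (g : N -> M),
      C M -> is_hom g -> injective g -> C N)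
  (* closed under quotients *)
  (hCquot : forall (M N : wmod Y one) (g : M -> N),
      C M -> is_hom g -> (forall y, exists x, g x = y) -> C N)
  (* closed under finite direct sums *)
  (hCsum : forall (M1 M2 N : wmod Y one) (i1 : M1 -> N) (i2 : M2 -> N),
      C M1 -> C M2 -> is_hom i1 -> is_hom i2 ->
      (forall w, exists x1 x2, w = i1 x1 + i2 x2) ->
      (forall x1 x2, i1 x1 + i2 x2 = 0 -> x1 = 0 /\ x2 = 0) -> C N)
  (* every module in C is finitely generated *)
  (hCfg : forall M, C M -> fin_generated M) :
  forall W : wmod Y one,
    in_Ind C W <-> (is_generalized om W /\ union_of_C_submodules C W).
Proof.
move=> W; split.
-
  apply: (ind_to_union (om := om)) => // M CM.
  by case: (hCgr M CM).
- by case=> _; apply: union_to_ind.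
Qed.
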